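(* Let the system's knowledge connectivity graph $G_{di}$ belong to $\mathcal{G}_{di}$, and let $V_{sink}$ be the set of sink members of $G_{di}$. If every correct process executes the Discovery algorithm, then every correct process $i$ eventually (a) discovers all sink members, i.e. $V_{sink}\cap C\subseteq \mathcal{S}_{known}$ at $i$ (the paper's proof in fact shows $V_{sink}\subseteq\mathcal{S}_{known}$), and (b) receives the participant detectors of all correct sink members, i.e. $V_{sink}\cap C\subseteq \mathcal{S}_{received}$ at $i$.
   Context: System model: a finite set $\Pi$ of processes with unique IDs (no Sybil attacks), partially synchronous: for every execution there exist an unknown time GST and a bound $\delta$ such that after GST every message between correct processes is delivered within $\delta$. A static set $F\subset\Pi$ of processes is Byzantine (arbitrary behavior, may collude); $C=\Pi\setminus F$ are the correct processes, and $|F|\le f$ for a fault threshold $f$. Channels are reliable and authenticated point-to-point, and processes can use unforgeable digital signatures; $\langle m\rangle_i$ denotes $m$ signed by $i$. Each process $i$ has a participant detector $PD_i\subseteq\Pi$ (the processes it initially knows); $i$ may send a message to $j$ only if $j$ is in $i$'s current set of known processes. The knowledge connectivity graph is the digraph $G_{di}=(\Pi,E_{di})$ with $(i,j)\in E_{di}$ iff $j\in PD_i$. Graph notions: a digraph is $k$-strongly connected if every ordered pair of distinct vertices is joined by $k$ internally node-disjoint directed paths; $\kappa(H)$ is the largest such $k$. A strongly connected component is a sink if no edge leaves it. A digraph belongs to $k$-OSR PD if (i) its underlying undirected graph is connected, (ii) its condensation (DAG of strongly connected components) has exactly one sink component $G_{sink}=(V_{sink},E_{sink})$, (iii) $G_{sink}$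 is $k$-strongly connected, and (iv) every vertex outside $V_{sink}$ has at least $k$ node-disjoint paths to every vertex of $V_{sink}$. The safe subgraph $G_{safe}$ is the subgraph of $G_{di}$ induced on $\Pi\setminus F$. $\mathcal{G}_{di}$ is the family of finite knowledge connectivity graphs whose safe subgraph belongs to $(f+1)$-OSR PD and whose safe sink component has at least $2f+1$ processes. The sink members of $G_{di}$ are the processes of the sink component of $G_{safe}$ together with the Byzantine processes belonging (in $G_{di}$) to the strongly connected component containing it. Discovery algorithm at process $i$: initialize $\mathcal{S}_{PD}=\{\langle i,PD_i\rangle_i\}$, $\mathcal{S}_{known}=PD_i\cup\{i\}$, $\mathcal{S}_{received}=\{i\}$. Periodically send $\langle\textsc{GetPDs}\rangle$ to every $j\in\mathcal{S}_{known}$. On receiving $\langle\textsc{GetPDs}\rangle$ from $j$, reply $\langle\textsc{SetPDs},\mathcal{S}_{PD}\rangle$. On receiving $\langle\textsc{SetPDs},pds_j\rangle$ from $j$: if $pds_j$ contains $\langle j,PD_j\rangle_j$ correctly signed by $j$, set $\mathcal{S}_{PD}\leftarrow\mathcal{S}_{PD}\cup pds_j$, add to $\mathcal{S}_{known}$ every process appearing in some signed PD in $pds_j$, and add to $\mathcal{S}_{received}$ every $k$ such that a PD signed by $k$ is in $pds_j$. *)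

From mathcomp Require Import all_boot.
Set Implicit Arguments. Unset Strict Implicit. Unset Printing Implicit Defensive.

Section Graph.
Variables (P : finType) (E : rel P).

Definition restr (V : {set P}) : rel P :=
  fun x y => [&& x \in V, y \in V & E x y].

Definition reach (V : {set P}) (x y : P) : bool := connect (restr V) x y.

Definition scc (V : {set P}) (x : P) : {set P} :=
  [set y in V | reach V x y && reach V y x].

Definition is_scc (V S : {set P}) : Prop := exists2 x, x \in V & S = scc V x.

Definition is_sink_scc (V S : {set P}) : Prop :=
  is_scc V S /\ (forall x y, x \in S -> y \in V -> E x y -> y \in S).

Definition weakly_connected (V : {set P}) : Prop :=
  forall x y, x \in V -> y \in V ->
    connect (fun a b => restr V a b || restr V b a) x y.

(* s is a simple directed path from u to v in the subgraph induced on V,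
   given by its full vertex list u :: ... :: v *)
Definition dipath (V : {set P}) (u v : P) (s : seq P) : bool :=
  match s with
  | x :: rest => [&& x == u, u \in V, path (restr V) u rest,
                     last u rest == v & uniq s]
  | [::] => false
  end.

Definition interior (u v : P) (s : seq P) : seq P :=
  [seq x <- s | (x != u) && (x != v)].

Definition k_disjoint_paths (V : {set P}) (u v : P) (k : nat) : Prop :=
  exists ps : seq (seq P),
    [/\ size ps = k, uniq ps, all (dipath V u v) ps &
        forall p q, p \in ps -> q \in ps -> p != q ->
          [disjoint interior u v p & interior u v q]].

Definition k_strongly_connected (V : {set P}) (k : nat) : Prop :=
  forall u v, u \in V -> v \in V -> u != v -> k_disjoint_paths V u v k.

Definition OSR (k : nat) (V : {set P}) : Prop :=
  weakly_connected V /\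
  exists S : {set P},
    [/\ is_sink_scc V S,
        (forall S', is_sink_scc V S' -> S' = S),
        k_strongly_connected S k &
        (forall u v, u \in V :\: S -> v \in S -> k_disjoint_paths V u v k)].

End Graph.

Definition kc_rel (P : finType) (PD : P -> {set P}) : rel P :=
  fun i j => j \in PD i.

(* G_di \in \mathcal{G}_di w.r.t. Byzantine set F and threshold f:
   G_safe (induced on C = ~: F) is in (f+1)-OSR PD and its sink component
   has at least 2f+1 processes. *)
Definition in_Gdi (P : finType) (PD : P -> {set P}) (F : {set P}) (f : nat)
  : Prop :=
  OSR (kc_rel PD) f.+1 (~: F) /\
  (forall S, is_sink_scc (kc_rel PD) (~: F) S -> 2 * f + 1 <= #|S|).

Definition sink_members (P : finType) (PD : P -> {set P}) (F Vs : {set P})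
  : {set P} :=
  Vs :|: [set b in F | [exists v in Vs, b \in scc (kc_rel PD) setT v]].

(* a (validly) signed participant detector <k, S>_k *)
Definition signed_pd (P : finType) := (P * {set P})%type.

Inductive msg (P : finType) :=
| GetPDs
| SetPDs of {set signed_pd P}.
Arguments GetPDs {P}.

(* local events processed by a process: a timer tick (periodic send of
   GetPDs), receipt of message m from j, or nothing *)
Inductive event (P : finType) :=
| Tick
| Recv of P & msg P
| Idle.
Arguments Tick {P}. Arguments Idle {P}.

Record lstate (P : finType) := LState {
  s_pd : {set signed_pd P};
  s_known : {set P};
  s_received : {set P} }.

Section Discovery.
Variables (P : finType) (PD : P -> {set P}).

Definition init (i : P) : lstate P :=
  LState [set (i, PD i)] (PD i :|: [set i]) [set i].

Definition appearing (pds : {set signed_pd P}) : {set P} :=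
  [set x | [exists kS in pds, (x == kS.1) || (x \in kS.2)]].

Definition signers (pds : {set signed_pd P}) : {set P} :=
  [set k | [exists S, (k, S) \in pds]].

Definition step (s : lstate P) (e : event P) : lstate P :=
  match e with
  | Recv j (SetPDs pds) =>
      if [exists S, (j, S) \in pds] then
        LState (s_pd s :|: pds) (s_known s :|: appearing pds)
               (s_received s :|: signers pds)
      else s
  | _ => s
  end.

Variable ev : nat -> P -> seq (event P).
(* ev t i = the events processed (in order) by process i during step t *)

Fixpoint state (t : nat) (i : P) : lstate P :=
  match t with
  | 0 => init i
  | t'.+1 => foldl step (state t' i) (ev t' i)
  end.

(* local state of i just before processing its n-th event of step t *)
Definition pre_state (t : nat) (i : P) (n : nat) : lstate P :=
  foldl step (state t i) (take n (ev t i)).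

Definition sends_on (s : lstate P) (e : event P) (dst : P) (m : msg P) : Prop :=
  match e with
  | Tick => m = GetPDs /\ dst \in s_known s
  | Recv j GetPDs => dst = j /\ m = SetPDs (s_pd s)
  | _ => False
  end.

Definition sent (t : nat) (src dst : P) (m : msg P) : Prop :=
  exists2 n, n < size (ev t src) &
    sends_on (pre_state t src n) (nth Idle (ev t src) n) dst m.

Definition received (t : nat) (i j : P) (m : msg P) : Prop :=
  exists2 n, n < size (ev t i) & nth Idle (ev t i) n = Recv j m.

Definition discovery_execution (F : {set P}) : Prop :=
  [/\ (* authenticated channels / no creation: a message from a correct
         sender was actually sent earlier by it *)
      (forall t i j m, i \notin F -> j \notin F -> received t i j m ->
         exists2 t0, t0 < t & sent t0 j i m),
      (* unforgeable signatures: Byzantine senders can only forward the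
         genuine PD of a correct process *)
      (forall t i j pds, i \notin F -> j \in F -> received t i j (SetPDs pds) ->
         forall k S, k \notin F -> (k, S) \in pds -> S = PD k),
      (* partial synchrony + reliable channels between correct processes *)
      (exists GST delta : nat, forall t0 i j m, i \notin F -> j \notin F ->
         sent t0 j i m ->
         exists2 t, t0 < t <= maxn t0 GST + delta & received t i j m) &
      (forall i t, i \notin F -> exists2 t', t <= t' & has (fun e => if e is Tick then true else false) (ev t' i))].

End Discovery.

From mathcomp Require Import all_boot.
Set Implicit Arguments. Unset Strict Implicit. Unset Printing Implicit Defensive.

(* Local states only grow, so "eventually known" is the same as "known at
   some time".  If a correct process j is known to the correct process i,
   the next GetPDs of i reaches j, whose SetPDs reply carries the signed
   PD_j; so i then receives j and knows every member of PD_j.  Hence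
   knowledge flows along the edges of G_safe, and every safe sink process
   is reachable from i in G_safe: inside the sink by strong connectivity,
   from outside along one of the f+1 disjoint paths.  Finally, the correct
   sink members are exactly the safe sink. *)

Section SinkReachability.
Variables (P : finType) (E : rel P).

Lemma dipath_reach (V : {set P}) (u v : P) (s : seq P) :
  dipath E V u v s -> reach E V u v.
Proof.
case: s => // x rest /and5P [_ _ rest_path /eqP <- _].
by apply/connectP; exists rest.
Qed.

Lemma scc_sub (V S : {set P}) : is_scc E V S -> S \subset V.
Proof. by case=> x _ ->; apply/subsetP => y; rewrite inE => /andP []. Qed.

Lemma scc_reach (V S : {set P}) (u v : P) :
  is_scc E V S -> u \in S -> v \in S -> reach E V u v.
Proof.
case=> x _ ->; rewrite !inE => /and3P [_ _ Hux] /and3P [_ Hxv _].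
exact: connect_trans Hux Hxv.
Qed.

Lemma OSR_reach_sink (k : nat) (V S : {set P}) (u v : P) :
  0 < k -> OSR E k V -> is_sink_scc E V S -> u \in V -> v \in S ->
  reach E V u v.
Proof.
move=> k_gt0 [_ [S0 [_ sink_uniq _ disjoint_paths]]] S_sink uV vS.
have eqS : S = S0 by exact: sink_uniq.
have [uS | uNS] := boolP (u \in S); first exact: scc_reach S_sink.1 uS vS.
have [ps [size_ps _ all_dipath _]] : k_disjoint_paths E V u v k.
  by apply: disjoint_paths; rewrite -eqS // inE uNS.
case: ps size_ps all_dipath => [size0 | s ps _ /andP [s_dipath _]].
  by rewrite -size0 in k_gt0.
exact: dipath_reach s_dipath.
Qed.

End SinkReachability.

Lemma sink_members_correct (P : finType) (PD : P -> {set P}) (F Vs : {set P}) :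
  sink_members PD F Vs :&: ~: F \subset Vs.
Proof.
apply/subsetP => x; rewrite !inE => /andP [/orP [// | /andP [xF _]]].
by rewrite xF.
Qed.

Lemma eventually_subset (T : finType) (X : nat -> {set T}) (A : {set T}) :
  (forall t t', t <= t' -> X t \subset X t') ->
  (forall x, x \in A -> exists t, x \in X t) ->
  exists t0, forall t, t0 <= t -> A \subset X t.
Proof.
move=> X_mono A_eventually.
suff [t0 sub_t0] : exists t0, {subset enum A <= X t0}.
  exists t0 => t le_t0t; apply/subsetP => x xA.
  by apply: (subsetP (X_mono _ _ le_t0t)); apply: sub_t0; rewrite mem_enum.
have : {subset enum A <= A} by move=> x; rewrite mem_enum.
elim: (enum A) => [_ | x s IHs sub_A]; first by exists 0.
have [t1 sub_t1] := IHs (fun y ys => sub_A y (mem_behead (ys : y \in behead (x :: s)))).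
have [t2 x_t2] := A_eventually x (sub_A x (mem_head x s)).
exists (maxn t1 t2) => y; rewrite inE => /predU1P [-> | ys].
  exact: subsetP (X_mono _ _ (leq_maxr t1 t2)) _ x_t2.
exact: subsetP (X_mono _ _ (leq_maxl t1 t2)) _ (sub_t1 y ys).
Qed.

Definition lstate_le (P : finType) (s1 s2 : lstate P) : Prop :=
  [/\ s_pd s1 \subset s_pd s2, s_known s1 \subset s_known s2 &
      s_received s1 \subset s_received s2].

Lemma lstate_le_refl (P : finType) (s : lstate P) : lstate_le s s.
Proof. by split. Qed.

Lemma lstate_le_trans (P : finType) (s1 s2 s3 : lstate P) :
  lstate_le s1 s2 -> lstate_le s2 s3 -> lstate_le s1 s3.
Proof.
case=> pd12 kn12 rc12 [pd23 kn23 rc23].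
by split; [exact: subset_trans pd12 pd23 | exact: subset_trans kn12 kn23 |
           exact: subset_trans rc12 rc23].
Qed.

Section Execution.
Variables (P : finType) (PD : P -> {set P}) (ev : nat -> P -> seq (event P)).

Lemma lstate_le_step (s : lstate P) (e : event P) : lstate_le s (step s e).
Proof.
case: e => [| j [| pds] |] /=; try exact: lstate_le_refl.
by case: ifP => _; [split; rewrite /= subsetUl | exact: lstate_le_refl].
Qed.

Lemma lstate_le_foldl (s : lstate P) (es : seq (event P)) :
  lstate_le s (foldl (@step P) s es).
Proof.
elim: es s => [| e es IHes] s /=; first exact: lstate_le_refl.
exact: lstate_le_trans (lstate_le_step s e) (IHes _).
Qed.

Lemma state_mono (i : P) (t t' : nat) :
  t <= t' -> lstate_le (state PD ev t i) (state PD ev t' i).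
Proof.
move=> /subnKC <-; elim: (t' - t) => [| d IHd].
  by rewrite addn0; exact: lstate_le_refl.
by rewrite addnS; exact: lstate_le_trans IHd (lstate_le_foldl _ _).
Qed.

Lemma known_mono (i : P) (t t' : nat) :
  t <= t' -> s_known (state PD ev t i) \subset s_known (state PD ev t' i).
Proof. by case/(state_mono i). Qed.

Lemma received_mono (i : P) (t t' : nat) :
  t <= t' -> s_received (state PD ev t i) \subset s_received (state PD ev t' i).
Proof. by case/(state_mono i). Qed.

Lemma state_le_pre_state (i : P) (t n : nat) :
  lstate_le (state PD ev t i) (pre_state PD ev t i n).
Proof. exact: lstate_le_foldl. Qed.

Lemma own_pd_pre_state (j : P) (t n : nat) :
  (j, PD j) \in s_pd (pre_state PD ev t j n).
Proof.
have [pd_state _ _] := lstate_le_trans (state_mono j (leq0n t))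
                                       (state_le_pre_state j t n).
by apply: (subsetP pd_state); rewrite /= set11.
Qed.

Lemma state_succ_at (i : P) (t n : nat) : n < size (ev t i) ->
  state PD ev t.+1 i =
  foldl (@step P) (step (pre_state PD ev t i n) (nth Idle (ev t i) n))
        (drop n.+1 (ev t i)).
Proof.
move=> n_lt; rewrite /= -{1}(cat_take_drop n (ev t i)) foldl_cat.
by rewrite (drop_nth Idle n_lt).
Qed.

Lemma received_setpds_effect (i j : P) (t : nat) (pds : {set signed_pd P}) :
  received ev t i j (SetPDs pds) -> (exists S, (j, S) \in pds) ->
  appearing pds \subset s_known (state PD ev t.+1 i) /\
  signers pds \subset s_received (state PD ev t.+1 i).
Proof.
move=> [n n_lt nth_n] [S jS]; rewrite (state_succ_at n_lt) nth_n /=.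
have -> : [exists S, (j, S) \in pds] by apply/existsP; exists S.
have [_ known_le received_le] := lstate_le_foldl
  (LState (s_pd (pre_state PD ev t i n) :|: pds)
          (s_known (pre_state PD ev t i n) :|: appearing pds)
          (s_received (pre_state PD ev t i n) :|: signers pds))
  (drop n.+1 (ev t i)).
by split; [exact: subset_trans (subsetUr _ _) known_le |
           exact: subset_trans (subsetUr _ _) received_le].
Qed.

Variable F : {set P}.

Hypothesis reliable_delivery : forall t0 i j m, i \notin F -> j \notin F ->
  sent PD ev t0 j i m -> exists2 t, t0 < t & received ev t i j m.

Hypothesis periodic_tick : forall i t, i \notin F ->
  exists2 t', t <= t' & has (fun e => if e is Tick then true else false) (ev t' i).

Lemma getpds_sent_eventually (i j : P) (T : nat) :
  i \notin F -> j \in s_known (state PD ev T i) ->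
  exists t, sent PD ev t i j GetPDs.
Proof.
move=> iC j_known; have [t le_Tt has_tick] := periodic_tick T iC.
set is_tick := (fun e : event P => _) in has_tick.
exists t, (find is_tick (ev t i)); first by rewrite -has_find.
have := nth_find Idle has_tick; case: nth => //= _; split=> //.
have [_ known_pre _] := state_le_pre_state i t (find is_tick (ev t i)).
exact: subsetP known_pre _ (subsetP (known_mono i le_Tt) _ j_known).
Qed.

Lemma known_correct_discovered (i j : P) (T : nat) :
  i \notin F -> j \notin F -> j \in s_known (state PD ev T i) ->
  exists t, PD j \subset s_known (state PD ev t i) /\
            j \in s_received (state PD ev t i).
Proof.
move=> iC jC j_known.
have [t0 sent_get] := getpds_sent_eventually iC j_known.
have [t1 _ [n n_lt nth_n]] := reliable_delivery jC iC sent_get.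
set pds := s_pd (pre_state PD ev t1 j n).
have sent_set : sent PD ev t1 j i (SetPDs pds) by exists n => //; rewrite nth_n.
have [t2 _ received_set] := reliable_delivery iC jC sent_set.
have j_pds : (j, PD j) \in pds by exact: own_pd_pre_state.
have [known_app received_sig] := received_setpds_effect received_set
                                   (ex_intro _ (PD j) j_pds).
exists t2.+1; split.
  apply/subsetP => y y_PDj; apply: (subsetP known_app); rewrite inE.
  by apply/existsP; exists (j, PD j); rewrite j_pds /= y_PDj orbT.
by apply: (subsetP received_sig); rewrite inE; apply/existsP; exists (PD j).
Qed.

Lemma reach_safe_known (i u v : P) (T : nat) :
  i \notin F -> reach (kc_rel PD) (~: F) u v ->
  u \in s_known (state PD ev T i) -> exists t, v \in s_known (state PD ev t i).
Proof.
move=> iC /connectP [p p_path ->] {v}.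
elim: p u T p_path => [| y p IHp] u T /=; first by move=> _ u_known; exists T.
case/andP => /and3P [uC _ u_y] p_path u_known; rewrite inE in uC.
have [t [PDu_known _]] := known_correct_discovered iC uC u_known.
exact: IHp p_path (subsetP PDu_known y u_y).
Qed.

End Execution.

Theorem theorem2 (P : finType) (PD : P -> {set P}) (F : {set P}) (f : nat)
    (Vs : {set P}) (ev : nat -> P -> seq (event P)) :
  #|F| <= f ->
  in_Gdi PD F f ->
  is_sink_scc (kc_rel PD) (~: F) Vs ->
  discovery_execution PD ev F ->
  forall i, i \notin F ->
  exists T, forall t, T <= t ->
    (sink_members PD F Vs :&: ~: F) \subset s_known (state PD ev t i) /\
    (sink_members PD F Vs :&: ~: F) \subset s_received (state PD ev t i).
Proof.
move=> _ [osr _] Vs_sink [_ _ [GST [delta synchrony]] periodic_tick] i iC.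
have delivery t0 k j m : k \notin F -> j \notin F -> sent PD ev t0 j k m ->
    exists2 t, t0 < t & received ev t k j m.
  by move=> kC jC /(synchrony _ _ _ _ kC jC) [t /andP [lt_t0t _]]; exists t.
have Vs_known v : v \in Vs -> exists t, v \in s_known (state PD ev t i).
  move=> vVs; have i_known : i \in s_known (state PD ev 0 i).
    by rewrite !inE eqxx orbT.
  have i_reach_v : reach (kc_rel PD) (~: F) i v.
    by apply: OSR_reach_sink (ltn0Sn f) osr Vs_sink _ vVs; rewrite inE.
  exact: (reach_safe_known (PD := PD) delivery periodic_tick iC i_reach_v i_known).
have Vs_received v : v \in Vs -> exists t, v \in s_received (state PD ev t i).
  move=> vVs; have [t v_known] := Vs_known v vVs.
  have vC : v \notin F by rewrite -in_setC (subsetP (scc_sub Vs_sink.1)).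
  have [t' [_ v_received]] :=
    known_correct_discovered delivery periodic_tick iC vC v_known.
  by exists t'.
have [T1 known_T1] := eventually_subset (known_mono PD ev i) Vs_known.
have [T2 received_T2] := eventually_subset (received_mono PD ev i) Vs_received.
exists (maxn T1 T2) => t; rewrite geq_max => /andP [le_T1 le_T2].
by split; apply: subset_trans (sink_members_correct PD F Vs) _;
  [exact: known_T1 | exact: received_T2].
Qed.
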